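(* Under the standing assumptions, let $\{x_i\}_{i=1}^N$ be a solution of the delayed Hegselmann–Krause system. Then for all $i,j=1,\dots,N$, every unit vector $v\in\mathbb{R}^d$ and every $n\in\mathbb{N}_0$, $$\langle x_i(t)-x_j(t),v\rangle\le e^{-K(t-t_0)}\langle x_i(t_0)-x_j(t_0),v\rangle+\big(1-e^{-K(t-t_0)}\big)D_n\qquad\text{for all }t\ge t_0\ge n\bar\tau.$$ Moreover, for every $n\in\mathbb{N}_0$, $$D_{n+1}\le e^{-K\bar\tau}d(n\bar\tau)+\big(1-e^{-K\bar\tau}\big)D_n.$$
   Context: Standing assumptions: $N\ge 2$, $d\ge 1$, $\bar\tau>0$; $\tau:[0,\infty)\to[0,\bar\tau]$ continuous; $\psi:\mathbb{R}^d\times\mathbb{R}^d\to\mathbb{R}$ continuous, bounded and strictly positive, $K:=\|\psi\|_\infty$; initial data $x_i^0:[-\bar\tau,0]\to\mathbb{R}^d$ continuous. The delayed Hegselmann–Krause system is $$\frac{d}{dt}x_i(t)=\frac{1}{N-1}\sum_{j\ne i}\psi\big(x_i(t),x_j(t-\tau(t))\big)\big(x_j(t-\tau(t))-x_i(t)\big),\quad t>0,$$ with $x_i=x_i^0$ on $[-\bar\tau,0]$; a solution means continuous $x_i:[-\bar\tau,\infty)\to\mathbb{R}^d$, differentiable on $(0,\infty)$, satisfying this. $d(t):=\max_{i,j}|x_i(t)-x_j(t)|$. For $n\in\mathbb{N}_0$, $D_n:=\max_{i,j=1,\dots,N}\max_{s,t\in[n\bar\tau-\bar\tau,\,n\bar\tau]}|x_i(s)-x_j(t)|$.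 *)

From HB Require Import structures.
From mathcomp Require Import all_boot all_order all_algebra.
From mathcomp Require Import all_classical all_reals all_analysis.
Set Implicit Arguments. Unset Strict Implicit. Unset Printing Implicit Defensive.
Import Order.TTheory GRing.Theory Num.Theory.
Import numFieldNormedType.Exports.
Local Open Scope classical_set_scope.
Local Open Scope ring_scope.

Definition dotv {R : realType} {d : nat} (u v : 'rV[R]_d) : R :=
  \sum_(k < d) u ord0 k * v ord0 k.
Definition enorm {R : realType} {d : nat} (u : 'rV[R]_d) : R :=
  Num.sqrt (dotv u u).

Definition supnorm {R : realType} {d : nat} (psi : 'rV[R]_d -> 'rV[R]_d -> R) : R :=
  sup (range (fun p : 'rV[R]_d * 'rV[R]_d => `|psi p.1 p.2|)).

Definition hk_rhs {R : realType} {N d : nat} (psi : 'rV[R]_d -> 'rV[R]_d -> R)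
  (tau : R -> R) (x : 'I_N -> R -> 'rV[R]_d) (i : 'I_N) (t : R) : 'rV[R]_d :=
  (N.-1)%:R^-1 *: \sum_(j < N | j != i)
     (psi (x i t) (x j (t - tau t)) *: (x j (t - tau t) - x i t)).

Definition hk_solution {R : realType} {N d : nat} (taubar : R)
  (psi : 'rV[R]_d -> 'rV[R]_d -> R) (tau : R -> R)
  (x0 x : 'I_N -> R -> 'rV[R]_d) : Prop :=
  (forall i : 'I_N, {within `[- taubar, +oo[, continuous (x i)}) /\
  (forall (i : 'I_N) (s : R), - taubar <= s <= 0 -> x i s = x0 i s) /\
  (forall (i : 'I_N) (t : R), 0 < t -> is_derive t (1 : R) (x i) (hk_rhs psi tau x i t)).

Definition diam {R : realType} {N d : nat} (x : 'I_N -> R -> 'rV[R]_d) (t : R) : R :=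
  \big[Num.max/0]_(i < N) \big[Num.max/0]_(j < N) enorm (x i t - x j t).

(* D_n = max_{i,j} max_{s,t in [n taubar - taubar, n taubar]} |x_i(s) - x_j(t)|
   (written as a sup; the max is attained by continuity) *)
Definition Dn {R : realType} {N d : nat} (taubar : R) (x : 'I_N -> R -> 'rV[R]_d)
  (n : nat) : R :=
  sup [set r : R | exists (i j : 'I_N) (s t : R),
       n%:R * taubar - taubar <= s <= n%:R * taubar /\
       n%:R * taubar - taubar <= t <= n%:R * taubar /\
       r = enorm (x i s - x j t)].

From HB Require Import structures.
From mathcomp Require Import all_boot all_order all_algebra.
From mathcomp Require Import all_classical all_reals all_analysis.
From mathcomp Require Import lra ring.
Import Order.TTheory GRing.Theory Num.Theory.
Import numFieldNormedType.Exports.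
Local Open Scope classical_set_scope.
Local Open Scope ring_scope.
Set Implicit Arguments. Unset Strict Implicit. Unset Printing Implicit Defensive.

(* Projecting the system on a unit direction v turns it into a scalar delayed
   consensus system y_k' = c sum_(j != k) w_kj (t) (y_j (t - tau t) - y_k t) with
   weights 0 <= w_kj <= K and c (N - 1) <= 1.  For such systems we prove:
   - a maximum principle: an upper bound M valid on a delay window
     [a - taubar, a] persists for all later times (first-crossing argument
     against the barrier M + e exp(t), then e -> 0);
   - exponential relaxation: y_k' <= K (M - y_k), hence by a Gronwall-type
     argument y_k(t) <= e^(-K(t-t0)) y_k(t0) + (1 - e^(-K(t-t0))) M; the
     symmetric lower bound follows by applying this to -y.
   On the n-th delay window all projections lie in a slab [M - D_n, M]; the two
   one-sided bounds at times t and t0 give the first estimate, and at two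
   different times s, t of the next window (with v the direction of
   x_i(s) - x_j(t)) they give D_(n+1) <= e^(-K taubar) d(n taubar)
   + (1 - e^(-K taubar)) D_n. *)

Section RealFacts.
Variable R : realType.
Implicit Types (g : R -> R) (a t : R).

Lemma le0_of_lt0_left g a t : a < t -> {for t, continuous g} ->
  (forall s, a <= s < t -> g s < 0) -> g t <= 0.
Proof.
move=> at1 cg neg.
have cgl : g s @[s --> t^'-] --> g t by exact: cvg_at_left_filter.
suff ev : \forall s \near t^'-, g s <= 0.
  exact: (closed_cvg [set r : R | r <= 0] (@closed_le _ 0) ev _ cgl).
near=> s; apply/ltW/neg; apply/andP; split; near: s.
- exact: nbhs_left_ge.
- exact: nbhs_left_lt.
Unshelve. all: by end_near. Qed.

Lemma lt_left_of_derive_lt0 g t l : is_derive t (1:R) g l -> l < 0 ->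
  \forall s \near t^'-, g t < g s.
Proof.
move=> [dg <-] l0.
have : \forall h \near 0^', h^-1 *: ((g \o shift t) (h *: (1:R)) - g t) < 0.
  exact: cvgr_lt dg _ l0.
rewrite near_withinE => /nbhs_ballP [del del0 H].
near=> s.
have st : s < t by near: s; exact: nbhs_left_lt.
have hs : s - t != 0 by rewrite subr_eq0 lt_eqF.
have : (s - t)^-1 * (g s - g t) < 0.
  have := H (s - t); rewrite /= scaler1 addrNK; apply => //.
  rewrite /ball /= sub0r normrN ltr0_norm ?subr_lt0 // opprB.
  by near: s; exact: nbhs_left_ltBl.
by rewrite nmulr_rlt0 ?invr_lt0 ?subr_lt0 // subr_gt0.
Unshelve. all: by end_near. Qed.

Lemma derive_ge0_at_first_zero g a t l : a < t -> is_derive t (1:R) g l ->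
  0 <= g t -> (forall s, a <= s < t -> g s < 0) -> 0 <= l.
Proof.
move=> at1 dg gt0 before; rewrite leNgt; apply/negP => l0.
have : \forall s \near t^'-, False.
  near=> s.
  have : g t < g s by near: s; exact: lt_left_of_derive_lt0 dg l0.
  rewrite ltNge (le_trans _ gt0) // ltW // before //; apply/andP; split.
    by near: s; exact: nbhs_left_ge.
  by near: s; exact: nbhs_left_lt.
by case/filter_ex.
Unshelve. all: by end_near. Qed.

(* Gronwall-type estimate: g' <= - K g on ]t0, t[ gives g t <= e^(-K (t - t0)) g t0,
   because e^(K s) g s is nonincreasing *)
Lemma exp_decay g (g' : R -> R) (K t0 t : R) : t0 <= t ->
  {within `[t0, t], continuous g} ->
  (forall s, t0 < s < t -> is_derive s (1:R) g (g' s)) ->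
  (forall s, t0 < s < t -> g' s <= - K * g s) ->
  g t <= expR (- K * (t - t0)) * g t0.
Proof.
move=> t0t cg dg g'le.
pose e := fun s : R => expR (K * s).
have de s : is_derive s (1:R) e (expR (K * s) * K).
  have dK : is_derive s (1:R) ( *%R K) K.
    by have := is_deriveZ K (is_derive_id s (1:R)); rewrite scaler1.
  exact: (is_derive1_comp (f := expR) (g := *%R K)).
have ce : continuous e.
  by move=> s; apply/differentiable_continuous/derivable1_diffP; case: (de s).
have dh s : t0 < s < t -> is_derive s (1:R) (e \* g) (e s * (g' s + K * g s)).
  move=> hs; have := is_deriveM (de s) (dg s hs).
  by rewrite /GRing.scale /= => H; apply: is_derive_eq H _; rewrite /e; ring.
have hdecr : (e \* g) t <= (e \* g) t0.
  apply: (@ler0_derive1_le_cc _ (e \* g) t0 t) => //.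
  - by move=> s; rewrite in_itv /= => /dh [].
  - move=> s; rewrite in_itv /= => hs; rewrite derive1E (@derive_val _ _ _ _ _ _ _ (dh s hs)).
    by apply: mulr_ge0_le0; [exact: expR_ge0 | have := g'le s hs; lra].
  - have ce' : {within `[t0, t], continuous e} := continuous_subspaceT ce.
    by move=> s; exact: continuousM (ce' s) (cg s).
  - by rewrite in_itv /= lexx t0t.
  - by rewrite in_itv /= lexx t0t.
move: hdecr; rewrite /= /e -ler_pdivlMl ?expR_gt0 // mulrA -expRN -expRD.
by congr (_ <= _ * _); congr expR; ring.
Qed.

(* for finitely many functions, negative at a and continuous on [a, +oo[, some of
   which becomes nonnegative later: there is a first time ts > a at which one of
   them is nonnegative; all of them are negative before ts and nonpositive at ts.
   ts is the infimum of the crossing times, and it is one by continuity *)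
Lemma first_crossing (I : finType) (g : I -> R -> R) (a s0 : R) (k0 : I) :
  (forall k, {within `[a, +oo[, continuous (g k)}) ->
  (forall k, g k a < 0) -> a <= s0 -> 0 <= g k0 s0 ->
  exists ts, [/\ a < ts, exists k, 0 <= g k ts,
    forall k s, a <= s < ts -> g k s < 0 & forall k, g k ts <= 0].
Proof.
move=> cg ga_neg as0 gs0.
pose S := [set s | a <= s /\ exists k, 0 <= g k s].
have nS : S !=set0 by exists s0; split => //; exists k0.
have lbS : lbound S a by move=> s [].
have hlb : has_lbound S by exists a.
set ts := inf S.
have ats : a <= ts := lb_le_inf nS lbS.
have before k s : a <= s < ts -> g k s < 0.
  case/andP=> as1 sts; rewrite ltNge; apply/negP => h.
  by have := ge_inf hlb (conj as1 (ex_intro _ k h)); rewrite leNgt sts.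
have [k hk] : exists k, 0 <= g k ts.
  apply: contrapT => nocross.
  have after : \forall r \near within `[a, +oo[ (nbhs ts), forall k, g k r < 0.
    apply: filter_forall => k.
    have gk_neg : g k ts < 0 by rewrite ltNge; apply/negP => h; apply: nocross; exists k.
    move: ((subspace_continuousP _ _).1 (cg k) ts).
    have ts_in : `[a, +oo[%classic ts by rewrite /= in_itv /= ats.
    by move=> /(_ ts_in) /cvgr_lt /(_ _ gk_neg).
  move: after; rewrite near_withinE => /nbhs_ballP [del del0 Hdel].
  suff : ts + del / 2 <= ts by rewrite gerDl leNgt divr_gt0.
  apply: lb_le_inf nS _ => s [as1 [k hk]].
  rewrite leNgt; apply/negP => sdel.
  have tss : ts <= s := ge_inf hlb (conj as1 (ex_intro _ k hk)).
  have : g k s < 0.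
    apply: Hdel; last by rewrite /= in_itv /= as1.
    rewrite /ball /= distrC ger0_norm ?subr_ge0 // ltrBlDl (lt_le_trans sdel) //.
    by rewrite lerD2l ler_pdivrMr //; lra.
  by rewrite ltNge hk.
have ats' : a < ts.
  rewrite lt_neqAle ats andbT; apply/eqP => ta.
  by move: hk; rewrite -ta leNgt ga_neg.
exists ts; split => //; first by exists k.
move=> j; apply: (le0_of_lt0_left ats'); last exact: before.
have [cgj _] := (continuous_within_itvcyP a (g j)).1 (cg j).
by apply: cgj; rewrite in_itv /= ats'.
Qed.

Lemma convex_weight_le (E E' p m : R) : E <= E' -> m <= p ->
  E * p + (1 - E) * m <= E' * p + (1 - E') * m.
Proof.
move=> EE' mp; have : 0 <= (E' - E) * (p - m) by rewrite mulr_ge0 // subr_ge0.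
by rewrite !mulrBl !mulrBr !mul1r; lra.
Qed.

End RealFacts.

Section DelaySystem.
Variables (R : realType) (N : nat) (taubar c K : R) (tau : R -> R)
  (w : 'I_N -> 'I_N -> R -> R).

Definition drift (y : 'I_N -> R -> R) (k : 'I_N) (t : R) : R :=
  c * \sum_(j < N | j != k) w k j t * (y j (t - tau t) - y k t).

Definition delay_solution (y : 'I_N -> R -> R) : Prop :=
  (forall k, {within `[- taubar, +oo[, continuous (y k)}) /\
  (forall (k : 'I_N) (t : R), 0 < t -> is_derive t (1:R) (y k) (drift y k t)).

(* the system is invariant under y |-> - y, which turns upper bounds into lower ones *)
Lemma drift_opp (y : 'I_N -> R -> R) k t :
  drift (fun j s => - y j s) k t = - drift y k t.
Proof.
rewrite /drift -mulrN -sumrN; congr (_ * _).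
by apply: eq_bigr => j _; rewrite -mulrN opprB opprK addrC.
Qed.

Lemma delay_solution_opp (y : 'I_N -> R -> R) :
  delay_solution y -> delay_solution (fun k t => - y k t).
Proof.
case=> cy dy; split=> [k s|k t t0]; first exact/continuousN/cy.
by rewrite drift_opp; exact: is_deriveN (dy k t t0).
Qed.

Hypothesis taubar_gt0 : 0 < taubar.
Hypothesis tau_range : forall t, 0 <= t -> 0 <= tau t <= taubar.
Hypothesis c_ge0 : 0 <= c.
Hypothesis c_mass : c * (N.-1)%:R <= 1.
Hypothesis K_ge0 : 0 <= K.
Hypothesis w_ge0 : forall k j t, 0 <= w k j t.
Hypothesis w_le_K : forall k j t, w k j t <= K.

Lemma drift_le0 y k t :
  (forall j, y j (t - tau t) <= y k t) -> drift y k t <= 0.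
Proof.
move=> le_yk; apply: mulr_ge0_le0 => //; apply: sumr_le0 => j _.
by apply: mulr_ge0_le0 => //; rewrite subr_le0.
Qed.

(* maximum principle with the strictly increasing barrier M + e exp(t): at a first
   crossing time the drift is nonpositive while the barrier still grows *)
Lemma upper_invariance_strict y a M e : delay_solution y -> 0 <= a -> 0 < e ->
  (forall k s, a - taubar <= s <= a -> y k s <= M) ->
  forall k t, a - taubar <= t -> y k t < M + e * expR t.
Proof.
move=> [cy dy] a0 e0 window k0 t0 ht0.
pose b s := M + e * expR s.
have b_incr s r : s <= r -> b s <= b r by move=> sr; rewrite lerD2l ler_pM2l // ler_expR.
have below_window k s : a - taubar <= s <= a -> y k s < b s.
  by move=> hs; apply: le_lt_trans (window k s hs) _; rewrite ltrDl mulr_gt0 ?expR_gt0.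
have [t0a|at0] := leP t0 a; first by apply: below_window; rewrite ht0.
rewrite ltNge; apply/negP => cross0.
pose g k s := y k s - b s.
have cg k : {within `[a, +oo[, continuous (g k)}.
  apply: within_continuousB.
    apply: continuous_subspaceW (cy k) => s; rewrite /= !in_itv /= !andbT.
    by apply: le_trans; rewrite (le_trans _ a0) // oppr_le0 ltW.
  have cb : continuous b.
    by move=> s; apply/differentiable_continuous/derivable1_diffP; apply: derivableD.
  exact: continuous_subspaceT.
have ga k : g k a < 0.
  by rewrite subr_lt0 below_window // lexx andbT gerBl ltW.
have [ts [ats [k gk_ts] before at_ts]] :=
  first_crossing (k0 := k0) cg ga (ltW at0) (ltac:(by rewrite subr_ge0)).
have ts0 : 0 < ts := le_lt_trans a0 ats.
have below j s : a - taubar <= s <= ts -> y j s <= b s.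
  case/andP=> h1 h2; have [sa|as1] := leP s a; first by rewrite ltW // below_window ?h1.
  move: h2; rewrite le_eqVlt => /predU1P[->|sts]; first by rewrite -subr_le0 at_ts.
  by rewrite -subr_le0 ltW // before // ltW.
have drift_neg : drift y k ts <= 0.
  apply: drift_le0 => j; have [t1 t2] := andP (tau_range (ltW ts0)).
  apply: (le_trans (below j _ _)).
    by apply/andP; split; lra.
  by apply: le_trans (b_incr _ ts _) _; [rewrite gerBl | rewrite -subr_ge0].
have dg : is_derive ts (1:R) (g k) (drift y k ts - e * expR ts).
  have db : is_derive ts (1:R) b (0 + e *: expR ts).
    exact: is_deriveD (is_derive_cst M ts 1) (is_deriveZ e (is_derive_expR ts)).
  by have := is_deriveB (dy k ts ts0) db; rewrite add0r.
have := derive_ge0_at_first_zero ats dg gk_ts (before k).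
by rewrite leNgt subr_lt0 (le_lt_trans drift_neg) // mulr_gt0 ?expR_gt0.
Qed.

Lemma upper_invariance y a M : delay_solution y -> 0 <= a ->
  (forall k s, a - taubar <= s <= a -> y k s <= M) ->
  forall k t, a - taubar <= t -> y k t <= M.
Proof.
move=> sol a0 window k t ht; apply/ler_addgt0Pr => e e0.
have := upper_invariance_strict sol a0 (divr_gt0 e0 (expR_gt0 t)) window k ht.
by rewrite divfK ?gt_eqF ?expR_gt0 // => /ltW.
Qed.

Lemma drift_le_relax y M k t :
  (forall j, y j (t - tau t) <= M) -> y k t <= M -> drift y k t <= K * (M - y k t).
Proof.
move=> delayed_le yk_le.
have gap0 : 0 <= K * (M - y k t) by rewrite mulr_ge0 // subr_ge0.
apply: (@le_trans _ _ (c * \sum_(j < N | j != k) K * (M - y k t))).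
  apply: ler_wpM2l => //; apply: ler_sum => j _.
  apply: (@le_trans _ _ (w k j t * (M - y k t))).
    by rewrite ler_wpM2l // lerD2r.
  by rewrite ler_wpM2r ?subr_ge0.
rewrite sumr_const cardC1 card_ord -mulr_natr mulrA mulrAC.
by rewrite -[leRHS]mul1r ler_wpM2r // mulrC.
Qed.

Lemma upper_decay y a M : delay_solution y -> 0 <= a ->
  (forall k s, a - taubar <= s <= a -> y k s <= M) ->
  forall i t0 t, a <= t0 -> t0 <= t ->
  y i t <= expR (- K * (t - t0)) * y i t0 + (1 - expR (- K * (t - t0))) * M.
Proof.
move=> sol a0 window i t0 t at0 t0t.
have [cy dy] := sol.
have y_le := upper_invariance sol a0 window.
have past s : a <= s -> a - taubar <= s by move=> as1; rewrite (le_trans _ as1) // gerBl ltW.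
have decay : y i t - M <= expR (- K * (t - t0)) * (y i t0 - M).
  apply: (@exp_decay _ (fun s => y i s - M) (drift y i)); first exact: t0t.
  - apply: within_continuousB; last exact: continuous_subspaceT (@cst_continuous _ _ M).
    apply: continuous_subspaceW (cy i) => s; rewrite /= !in_itv /= => /andP[+ _].
    by rewrite andbT; apply: le_trans; rewrite (le_trans _ (le_trans a0 at0)) // oppr_le0 ltW.
  - move=> s /andP[t0s _]; rewrite -[drift y i s]subr0.
    exact: is_deriveB (dy i s (le_lt_trans (le_trans a0 at0) t0s)) (is_derive_cst M s 1).
  - move=> s /andP[t0s _]; have s0 : 0 <= s by rewrite (le_trans a0) // (le_trans at0) // ltW.
    rewrite mulNr -mulrN opprB; apply: drift_le_relax => //; last first.
      by apply: y_le; rewrite past // (le_trans at0) // ltW.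
    move=> j; apply: y_le; have [t1 t2] := andP (tau_range s0).
    by rewrite lerD ?lerN2 // (le_trans at0) // ltW.
move: decay; rewrite mulrBr mulrBl mul1r => decay; lra.
Qed.

Lemma lower_decay y a m : delay_solution y -> 0 <= a ->
  (forall k s, a - taubar <= s <= a -> m <= y k s) ->
  forall i t0 t, a <= t0 -> t0 <= t ->
  expR (- K * (t - t0)) * y i t0 + (1 - expR (- K * (t - t0))) * m <= y i t.
Proof.
move=> sol a0 window i t0 t at0 t0t.
have := upper_decay (M := - m) (delay_solution_opp sol) a0 _ i at0 t0t.
rewrite !mulrN -opprD lerN2; apply=> k s hs; rewrite lerN2; exact: window.
Qed.

End DelaySystem.

Section EuclideanGeometry.
Variables (R : realType) (d : nat).
Implicit Types (u v : 'rV[R]_d).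

Lemma dotvD u u' v : dotv (u + u') v = dotv u v + dotv u' v.
Proof. by rewrite /dotv -big_split /=; apply: eq_bigr => k _; rewrite mxE mulrDl. Qed.

Lemma dotv0 v : dotv 0 v = 0.
Proof. by rewrite /dotv big1 // => k _; rewrite mxE mul0r. Qed.

Lemma dotvZ a u v : dotv (a *: u) v = a * dotv u v.
Proof. by rewrite /dotv mulr_sumr; apply: eq_bigr => k _; rewrite mxE mulrA. Qed.

Lemma dotvB u u' v : dotv (u - u') v = dotv u v - dotv u' v.
Proof. by rewrite dotvD -scaleN1r dotvZ mulN1r. Qed.

Lemma dotv_sum (I : Type) (r : seq I) (P : pred I) (F : I -> 'rV[R]_d) v :
  dotv (\sum_(j <- r | P j) F j) v = \sum_(j <- r | P j) dotv (F j) v.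
Proof. exact: (big_morph (dotv^~ v) (fun a b => dotvD a b v) (dotv0 v)). Qed.

Lemma dotvC u v : dotv u v = dotv v u.
Proof. by apply: eq_bigr => k _; rewrite mulrC. Qed.

Lemma dotvv_ge0 u : 0 <= dotv u u.
Proof. by apply: sumr_ge0 => k _; rewrite -expr2 sqr_ge0. Qed.

Lemma enorm_ge0 u : 0 <= enorm u.
Proof. exact: sqrtr_ge0. Qed.

Lemma enorm_sq u : enorm u ^+ 2 = dotv u u.
Proof. by rewrite /enorm sqr_sqrtr // dotvv_ge0. Qed.

(* Cauchy-Schwarz against a unit vector, from 0 <= |u - mu v|^2 for all mu > 0 *)
Lemma dotv_le_enorm u v : enorm v = 1 -> dotv u v <= enorm u.
Proof.
move=> v1.
have key mu : 0 < mu -> 2 * mu * dotv u v <= enorm u ^+ 2 + mu ^+ 2.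
  move=> mu0; have := dotvv_ge0 (u - mu *: v).
  have -> : dotv (u - mu *: v) (u - mu *: v) =
      dotv u u - 2 * mu * dotv u v + mu ^+ 2 * dotv v v.
    rewrite /dotv mulr_sumr mulr_sumr -sumrB -big_split /=.
    by apply: eq_bigr => k _; rewrite !mxE; ring.
  by rewrite -!enorm_sq v1 expr1n mulr1; lra.
have [u0|u0] := eqVneq (enorm u) 0.
  rewrite u0; apply/ler_addgt0Pr => e e0; rewrite add0r.
  have := key (2 * e) ltac:(by rewrite mulr_gt0); rewrite u0 expr0n /= add0r => h.
  have h2 : 2 * (2 * e) * dotv u v <= 2 * (2 * e) * e by nra.
  by rewrite ler_pM2l ?mulr_gt0 // in h2.
have upos : 0 < enorm u by rewrite lt_neqAle eq_sym u0 enorm_ge0.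
have h2 : 2 * enorm u * dotv u v <= 2 * enorm u * enorm u by have := key _ upos; nra.
by rewrite ler_pM2l ?mulr_gt0 // in h2.
Qed.

Lemma unit_direction u : enorm u != 0 ->
  dotv u ((enorm u)^-1 *: u) = enorm u /\ enorm ((enorm u)^-1 *: u) = 1.
Proof.
move=> u0; split; first by rewrite dotvC dotvZ -enorm_sq expr2 mulrA mulVf // mul1r.
rewrite {1}/enorm dotvZ dotvC dotvZ mulrA -enorm_sq expr2 mulrACA mulVf // mulr1.
by rewrite sqrtr1.
Qed.

Lemma enorm_le_normr u : enorm u <= d%:R * `|u|.
Proof.
have coord_le k : `|u ord0 k| <= `|u|.
  by rewrite [leRHS]/Num.Def.normr /= mx_normrE; exact: (le_bigmax _ _ (ord0, k)).
rewrite /enorm -[leRHS]ger0_norm ?mulr_ge0 // -sqrtr_sqr ler_sqrt ?sqr_ge0 //.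
apply: (@le_trans _ _ (\sum_(k < d) `|u| ^+ 2)).
  apply: ler_sum => k _; rewrite -expr2 -real_normK ?num_real //.
  by rewrite lerXn2r ?nnegrE // coord_le.
rewrite sumr_const card_ord exprMn -[_ *+ d]mulr_natl; apply: ler_wpM2r; first exact: sqr_ge0.
by rewrite expr2 -natrM ler_nat; case: (d) => // n; rewrite leq_pmull.
Qed.

Lemma dotv_continuous v : continuous (dotv^~ v).
Proof.
have -> : dotv^~ v = \sum_(k < d) (fun u : 'rV[R]_d => u ord0 k * v ord0 k).
  by apply: funext => u; rewrite fct_sumE.
apply: (big_ind (fun f : 'rV[R]_d -> R => continuous f)).
- exact: cst_continuous.
- by move=> f g cf cg u; exact: continuousD (cf u) (cg u).
- move=> k _ u; apply: continuousM; first exact: coord_continuous.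
  exact: cst_continuous.
Qed.

Lemma is_derive_dotv (f : R -> 'rV[R]_d) (t : R) l v :
  is_derive t (1:R) f l -> is_derive t (1:R) (fun s => dotv (f s) v) (dotv l v).
Proof.
move=> [df <-].
have dcoord k : is_derive t (1:R) (fun s => f s ord0 k * v ord0 k) ('D_1 f t ord0 k * v ord0 k).
  have dk : is_derive t (1:R) (fun s => f s ord0 k) ('D_1 f t ord0 k).
    apply: DeriveDef; first exact: ((derivable_mxP f t 1).1 df ord0 k).
    by rewrite (derive_mx df) mxE.
  have := is_deriveM dk (is_derive_cst (v ord0 k) t 1).
  by rewrite scaler0 add0r [X in is_derive _ _ _ X]mulrC.
have := is_derive_sum dcoord.
by have -> : \sum_(k < d) (fun s => f s ord0 k * v ord0 k) = (fun s => dotv (f s) v)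
  by apply: funext => s; rewrite fct_sumE.
Qed.

End EuclideanGeometry.

Section HegselmannKrause.
Variables (R : realType) (N d : nat) (taubar : R) (tau : R -> R)
  (psi : 'rV[R]_d -> 'rV[R]_d -> R) (x0 x : 'I_N -> R -> 'rV[R]_d).
Hypothesis N_ge2 : (2 <= N)%N.
Hypothesis taubar_gt0 : 0 < taubar.
Hypothesis tau_range : forall t, 0 <= t -> 0 <= tau t <= taubar.
Hypothesis psi_bounded : exists M, forall p q, `|psi p q| <= M.
Hypothesis psi_gt0 : forall p q, 0 < psi p q.
Hypothesis x_sol : hk_solution taubar psi tau x0 x.

Let K := supnorm psi.
Let agent0 : 'I_N := Ordinal (leq_trans (isT : (1 <= 2)%N) N_ge2).

Lemma psi_le_K p q : psi p q <= K.
Proof.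
have [M psiM] := psi_bounded; apply: le_trans (ler_norm _) _.
apply: (ub_le_sup (E := range (fun p : 'rV[R]_d * 'rV[R]_d => `|psi p.1 p.2|))).
  by exists M => r [pq _ <-]; exact: psiM.
by exists (p, q).
Qed.

Lemma K_ge0 : 0 <= K.
Proof. exact: le_trans (ltW (psi_gt0 0 0)) (psi_le_K 0 0). Qed.

Definition hk_weight (k j : 'I_N) (t : R) : R := psi (x k t) (x j (t - tau t)).

Lemma hk_weight_ge0 k j t : 0 <= hk_weight k j t.
Proof. exact/ltW/psi_gt0. Qed.

Lemma hk_weight_le_K k j t : hk_weight k j t <= K.
Proof. exact: psi_le_K. Qed.

Lemma hk_rate_ge0 : 0 <= (N.-1)%:R^-1 :> R.
Proof. by rewrite invr_ge0. Qed.

Lemma hk_mass : (N.-1)%:R^-1 * (N.-1)%:R <= 1 :> R.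
Proof. by rewrite mulVf // pnatr_eq0 -lt0n; case: N N_ge2 => // -[]. Qed.

Lemma hk_projection v :
  delay_solution taubar (N.-1)%:R^-1 tau hk_weight (fun k t => dotv (x k t) v).
Proof.
have [cx [_ dx]] := x_sol; split=> [k t|k t t0].
  exact: continuous_comp (cx k t) (@dotv_continuous _ _ v (x k t)).
apply: is_derive_eq (is_derive_dotv v (dx k t t0)) _.
rewrite /hk_rhs /drift dotvZ dotv_sum; congr (_ * _).
by apply: eq_bigr => j _; rewrite dotvZ dotvB.
Qed.

Definition delay_window (n : nat) (s : R) : bool :=
  n%:R * taubar - taubar <= s <= n%:R * taubar.

Lemma delay_window_right n : delay_window n (n%:R * taubar).
Proof. by rewrite /delay_window lexx andbT gerBl ltW. Qed.

Lemma window_ge0 n : 0 <= n%:R * taubar.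
Proof. by rewrite mulr_ge0 // ltW. Qed.

(* the distances on a window are bounded (continuity on a compact interval), so D_n
   is a genuine supremum dominating them *)
Lemma Dn_set_bounded n : has_ubound [set r : R | exists (i j : 'I_N) (s t : R),
    n%:R * taubar - taubar <= s <= n%:R * taubar /\
    n%:R * taubar - taubar <= t <= n%:R * taubar /\ r = enorm (x i s - x j t)].
Proof.
have x_max i : exists c, forall s, delay_window n s -> `|x i s| <= `|x i c|.
  have cxi : {within `[n%:R * taubar - taubar, n%:R * taubar], continuous (x i)}.
    apply: continuous_subspaceW (x_sol.1 i) => s; rewrite /= !in_itv /= andbT.
    by case/andP => + _; apply: le_trans; rewrite lerBrDr addNr window_ge0.
  have ab : n%:R * taubar - taubar <= n%:R * taubar by rewrite gerBl ltW.
  have cn : {within `[n%:R * taubar - taubar, n%:R * taubar], continuous (fun s => `|x i s|)}.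
    by move=> z; exact: continuous_comp (cxi z) (@norm_continuous _ _ (x i z)).
  have [c _ cmax] := EVT_max ab cn.
  by exists c => s hs; apply: cmax; rewrite in_itv.
have [c cmax] := choice x_max.
pose B := \big[Num.max/0]_l `|x l (c l)|.
have xB i s : delay_window n s -> `|x i s| <= B.
  by move=> hs; apply: le_trans (cmax i s hs) (le_bigmax _ (fun l => `|x l (c l)|) i).
exists (d%:R * (B + B)) => r [i [j [s [t [hs [ht ->]]]]]].
apply: le_trans (enorm_le_normr _) _; rewrite ler_wpM2l //.
by apply: le_trans (ler_normB _ _) _; rewrite lerD ?xB.
Qed.

Lemma enorm_le_Dn n i j s t : delay_window n s -> delay_window n t ->
  enorm (x i s - x j t) <= Dn taubar x n.
Proof. by move=> hs ht; apply: (ub_le_sup (Dn_set_bounded n)); exists i, j, s, t. Qed.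

Lemma projected_window v n : enorm v = 1 -> exists M,
  (forall k s, delay_window n s -> dotv (x k s) v <= M) /\
  (forall k s, delay_window n s -> M - Dn taubar x n <= dotv (x k s) v).
Proof.
move=> v1.
pose U := [set r | exists k s, delay_window n s /\ r = dotv (x k s) v].
have spread k l s s' : delay_window n s -> delay_window n s' ->
    dotv (x k s) v <= dotv (x l s') v + Dn taubar x n.
  move=> hs hs'; rewrite -lerBlDl -dotvB.
  exact: le_trans (dotv_le_enorm _ v1) (enorm_le_Dn k l hs hs').
have a_in := delay_window_right n.
have U_ub : ubound U (dotv (x agent0 (n%:R * taubar)) v + Dn taubar x n).
  by move=> r [k [s [hs ->]]]; exact: spread.
exists (sup U); split=> [k s hs|k s hs].
  by apply: (ub_le_sup (E := U)); [eexists; exact: U_ub | exists k, s].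
rewrite lerBlDr; apply: ge_sup => [|r [l [s' [hs' ->]]]]; last exact: spread.
by exists (dotv (x agent0 (n%:R * taubar)) v); exists agent0, (n%:R * taubar).
Qed.

Lemma enorm_le_diam t i j : enorm (x i t - x j t) <= diam x t.
Proof.
apply: le_trans (le_bigmax _ (fun j => enorm (x i t - x j t)) j) _.
exact: (le_bigmax _ (fun i => \big[Num.max/0]_(j < N) enorm (x i t - x j t)) i).
Qed.

Lemma Dn_ge0 n : 0 <= Dn taubar x n.
Proof.
have a_in := delay_window_right n.
exact: le_trans (enorm_ge0 _) (enorm_le_Dn agent0 agent0 a_in a_in).
Qed.

Let E (s : R) := expR (- K * s).

Lemma projected_slab_decay v n : enorm v = 1 -> exists M,
  [/\ forall k, dotv (x k (n%:R * taubar)) v <= M,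
      forall k, M - Dn taubar x n <= dotv (x k (n%:R * taubar)) v,
      forall k t0 t, n%:R * taubar <= t0 -> t0 <= t ->
        dotv (x k t) v <= E (t - t0) * dotv (x k t0) v + (1 - E (t - t0)) * M
    & forall k t0 t, n%:R * taubar <= t0 -> t0 <= t ->
        E (t - t0) * dotv (x k t0) v + (1 - E (t - t0)) * (M - Dn taubar x n)
          <= dotv (x k t) v].
Proof.
move=> v1; have [M [upper lower]] := projected_window n v1.
have decay := upper_decay taubar_gt0 tau_range hk_rate_ge0 hk_mass K_ge0
  hk_weight_ge0 hk_weight_le_K (hk_projection v) (window_ge0 n) upper.
have growth := lower_decay taubar_gt0 tau_range hk_rate_ge0 hk_mass K_ge0
  hk_weight_ge0 hk_weight_le_K (hk_projection v) (window_ge0 n) lower.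
by exists M; split=> [k|k|k t0 t|k t0 t]; rewrite ?upper ?lower ?delay_window_right //;
  [exact: decay | exact: growth].
Qed.

Lemma hk_directional_contraction i j v n t0 t : enorm v = 1 ->
  n%:R * taubar <= t0 -> t0 <= t ->
  dotv (x i t - x j t) v <=
    E (t - t0) * dotv (x i t0 - x j t0) v + (1 - E (t - t0)) * Dn taubar x n.
Proof.
move=> v1 nt0 t0t; have [M [_ _ decay growth]] := projected_slab_decay n v1.
have := decay i t0 t nt0 t0t; have := growth j t0 t nt0 t0t.
by rewrite !dotvB; lra.
Qed.

(* second claim: for s, t in the next window, measure |x_i(s) - x_j(t)| along its own
   direction and compare both relaxations with the slowest one, e^(-K taubar) *)
Lemma Dn_step n :
  Dn taubar x n.+1 <= E taubar * diam x (n%:R * taubar) + (1 - E taubar) * Dn taubar x n.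
Proof.
set a := n%:R * taubar.
have E0 : 0 <= E taubar by exact: expR_ge0.
have E1 : E taubar <= 1.
  by rewrite /E -expR0 ler_expR mulNr oppr_le0 mulr_ge0 ?K_ge0 // ltW.
have lo : n.+1%:R * taubar - taubar = a by rewrite -addn1 natrD mulrDl mul1r addrK.
have hi : n.+1%:R * taubar = a + taubar by rewrite -addn1 natrD mulrDl mul1r.
have E_le s : a <= s <= a + taubar -> E taubar <= E (s - a).
  case/andP=> _ sa; rewrite /E ler_expR !mulNr lerN2 ler_wpM2l ?K_ge0 //.
  by rewrite lerBlDl.
apply: ge_sup.
  exists (enorm (x agent0 a - x agent0 a)), agent0, agent0, a, a.
  by rewrite lo hi lexx lerDl ltW.
move=> r [i [j [s [t [hs [ht ->]]]]]]; rewrite lo hi in hs ht.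
have [u0|u0] := eqVneq (enorm (x i s - x j t)) 0.
  have diam0 : 0 <= diam x a := le_trans (enorm_ge0 _) (enorm_le_diam a agent0 agent0).
  by rewrite u0 addr_ge0 // mulr_ge0 ?subr_ge0 ?Dn_ge0.
have [len_v v1] := unit_direction u0.
set v := (enorm _)^-1 *: _ in len_v v1; rewrite -len_v.
have [M [top bottom decay growth]] := projected_slab_decay n v1.
have yi := decay i a s (lexx a) (proj1 (andP hs)).
have yj := growth j a t (lexx a) (proj1 (andP ht)).
(* the relaxation after time s (resp. t) is at least the one after taubar *)
have top_i : - M <= - dotv (x i a) v by rewrite lerN2 top.
have wi := convex_weight_le (E_le s hs) top_i.
have wj := convex_weight_le (E_le t ht) (bottom j).
have dij : E taubar * dotv (x i a - x j a) v <= E taubar * diam x a.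
  by rewrite ler_wpM2l // (le_trans (dotv_le_enorm _ v1)) ?enorm_le_diam.
rewrite !mulrN in wi; rewrite !dotvB in dij *; rewrite /E in yi yj wi wj dij *; lra.
Qed.

End HegselmannKrause.

Theorem lemma2p4 (R : realType) (N d : nat) (taubar : R)
  (tau : R -> R) (psi : 'rV[R]_d -> 'rV[R]_d -> R)
  (x0 x : 'I_N -> R -> 'rV[R]_d) :
  (2 <= N)%N -> (1 <= d)%N -> 0 < taubar ->
  {within `[0, +oo[, continuous tau} ->
  (forall t, 0 <= t -> 0 <= tau t <= taubar) ->
  continuous (fun p : 'rV[R]_d * 'rV[R]_d => psi p.1 p.2) ->
  (exists M, forall p q, `|psi p q| <= M) ->
  (forall p q, 0 < psi p q) ->
  (forall i, {within `[- taubar, 0], continuous (x0 i)}) ->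
  hk_solution taubar psi tau x0 x ->
  let K := supnorm psi in
  (forall (i j : 'I_N) (v : 'rV[R]_d) (n : nat) (t0 t : R),
     enorm v = 1 -> n%:R * taubar <= t0 -> t0 <= t ->
     dotv (x i t - x j t) v <=
       expR (- K * (t - t0)) * dotv (x i t0 - x j t0) v
       + (1 - expR (- K * (t - t0))) * Dn taubar x n) /\
  (forall n : nat,
     Dn taubar x n.+1 <=
       expR (- K * taubar) * diam x (n%:R * taubar)
       + (1 - expR (- K * taubar)) * Dn taubar x n).
Proof.
move=> N_ge2 _ taubar_gt0 _ tau_range _ psi_bounded psi_gt0 _ x_sol K; split.
- exact: hk_directional_contraction N_ge2 taubar_gt0 tau_range psi_bounded psi_gt0 x_sol.
- exact: Dn_step N_ge2 taubar_gt0 tau_range psi_bounded psi_gt0 x_sol.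
Qed.
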